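(* Let $q$ be a prime power, $n\ge 1$ with $\gcd(n,q)=1$, and $\lambda\in\mathbb{F}_q^{*}$ of multiplicative order $t$. Let $\mathcal{C}=\mathcal{I}_i$ be an irreducible $\lambda$-constacyclic code of length $n$ and dimension $k$ over $\mathbb{F}_q$ corresponding to the $q$-cyclotomic coset $C_{1+t\alpha_i}=\{1+t\alpha_i,(1+t\alpha_i)q,\dots,(1+t\alpha_i)q^{k-1}\}$ modulo $tn$ (so $k=d_i$). Then $$N_{\langle\rho\rangle}(\mathcal{C}^{*})=\frac{(q^k-1)\gcd(1+t\alpha_i,n)}{tn}.$$ Moreover, the number of distinct nonzero Hamming weights of codewords of $\mathcal{C}$ is at most $N_{\langle\rho\rangle}(\mathcal{C}^{*})$, with equality if and only if for any two nonzero codewords $c_1,c_2\in\mathcal{C}$ of the same Hamming weight there exists an integer $j$ with $\rho^{j}(c_1)=c_2$.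
   Context: Standing setup: $q$ is a prime power, $n$ a positive integer with $\gcd(n,q)=1$, $\lambda\in\mathbb{F}_q^{*}$ has multiplicative order $t$ (so $t\mid q-1$). $\mathcal{R}=\mathbb{F}_q[x]/\langle x^n-\lambda\rangle$; vectors $(c_0,\dots,c_{n-1})\in\mathbb{F}_q^n$ are identified with $c_0+c_1x+\dots+c_{n-1}x^{n-1}\in\mathcal{R}$, and a $\lambda$-constacyclic code of length $n$ is an ideal of $\mathcal{R}$. Let $\zeta$ be a primitive $tn$-th root of unity in an extension $\mathbb{F}_{q^m}$ with $\zeta^n=\lambda$, so $x^n-\lambda=\prod_{i=0}^{n-1}(x-\zeta^{1+ti})$. The set $\mathcal{S}=\{1+ti:0\le i\le n-1\}$ (residues mod $tn$) is partitioned into the distinct $q$-cyclotomic cosets modulo $tn$, $C_{1+t\alpha_j}=\{(1+t\alpha_j)q^{h}\bmod tn: h\ge 0\}$, $j=0,\dots,s$, with $0=\alpha_0<\alpha_1<\dots<\alpha_s\le n-1$ and $d_j=|C_{1+t\alpha_j}|$. Let $m_j(x)=\prod_{h\in C_{1+t\alpha_j}}(x-\zeta^{h})$ (irreducible over $\mathbb{F}_q$), and let $\mathcal{I}_j$ be the ideal of $\mathcal{R}$ generated by $(x^n-\lambda)/m_j(x)$; this is an irreducible (minimal) $\lambda$-constacyclic code of dimension $d_j$, said to correspond to the coset $C_{1+t\alpha_j}$, and $\mathcal{R}=\mathcal{I}_0\oplus\dots\oplus\mathcal{I}_s$. The cyclic shift $\rho:\mathcal{R}\to\mathcal{R}$ is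 $\rho(c(x))=xc(x)$, i.e. $(c_0,\dots,c_{n-1})\mapsto(\lambda c_{n-1},c_0,\dots,c_{n-2})$; $\langle\rho\rangle$ is the cyclic group it generates, of order $tn$, acting on every $\lambda$-constacyclic code. For $b\in\mathbb{F}_q^{*}$, $\sigma_b(c)=bc$, and $M=\{\sigma_b:b\in\mathbb{F}_q^{*}\}$; $\langle\rho,M\rangle$ is the group generated by $\rho$ and $M$. For a code $\mathcal{C}$, $\mathcal{C}^{*}=\mathcal{C}\setminus\{0\}$, and for a group $G$ acting on a finite set $X$, $N_G(X)$ denotes the number of $G$-orbits on $X$. *)

From HB Require Import structures.
From mathcomp Require Import all_boot all_order all_algebra all_field.
Set Implicit Arguments.
Unset Strict Implicit.
Unset Printing Implicit Defensive.
Import GRing.Theory.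
Local Open Scope ring_scope.

(* b lies in the q-cyclotomic coset of a modulo N, i.e. b = a q^e (mod N)
   for some e >= 0.  Since gcd(q,N)=1 in our setting, the multiplicative
   order of q modulo N is < N (for N >= 2; trivial for N = 1), so ranging
   e over 0..N-1 covers all exponents. *)
Definition in_qcoset (q N a b : nat) : bool :=
  [exists e : 'I_N, (b %% N == (a * q ^ e) %% N)%N].

Definition qcoset (q N a : nat) : {set 'I_N} :=
  [set r : 'I_N | in_qcoset q N a r].

Section Code.
Variables (F : finFieldType) (n : nat) (lam : F).

Definition xnl : {poly F} := 'X^n - lam%:P.

Definition rho (c : 'rV[F]_n) : 'rV[F]_n := poly_rV (('X * rVpoly c) %% xnl).

(* ideal of R = F[x]/<x^n - lambda> generated by (x^n - lambda)/m(x);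
   elements of R are represented by vectors (polynomials of degree < n). *)
Definition irr_code (m : {poly F}) : {set 'rV[F]_n} :=
  [set c | [exists f : 'rV[F]_n,
     rVpoly c == (rVpoly f * (xnl %/ m)) %% xnl]].

Definition wH (c : 'rV[F]_n) : nat := #|[set i | c 0 i != 0]|.

Definition nonzero (C : {set 'rV[F]_n}) : {set 'rV[F]_n} := C :\ 0.

Definition rho_orbit (c : 'rV[F]_n) : {set 'rV[F]_n} :=
  [set d | fconnect rho c d].

Definition N_rho (X : {set 'rV[F]_n}) : nat := #|[set rho_orbit c | c in X]|.

Definition num_weights (C : {set 'rV[F]_n}) : nat :=
  size (undup [seq wH c | c <- enum (nonzero C)]).
End Code.

(* Write N = t n, a = 1 + t alpha and C = <g> with g = (x^n - lambda) / m,
   where m is the minimal polynomial of zeta^a over F_q, whose roots are the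
   conjugates zeta^(a q^e).  A nonzero codeword c = h g (deg h < k) is fixed
   by rho^j iff m | (x^j - 1) h iff (zeta^a)^j = 1 iff N | a j, so every
   nonzero codeword lies on a <rho>-cycle of length N / gcd(a, N).  As rho is
   a bijection and C has q^k - 1 nonzero codewords, counting orbits gives
   N_rho(C \ 0) N = (q^k - 1) gcd(a, n).  Moreover rho preserves the Hamming
   weight, so the weight is a function of the orbit: there are at most as
   many nonzero weights as orbits, with equality iff equal weights force
   equal orbits. *)

From HB Require Import structures.
From mathcomp Require Import all_boot all_order all_algebra all_field zify.
Set Implicit Arguments.
Unset Strict Implicit.
Unset Printing Implicit Defensive.
Import GRing.Theory.
Local Open Scope ring_scope.

(* Dividing by g = gcd(a, N) leaves the coprime factors a/g and N/g, so
   N | a j exactly when N/g | j. *)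
Lemma dvdn_mul_gcd (a N j : nat) : (0 < a)%N ->
  (N %| a * j)%N = (N %/ gcdn a N %| j)%N.
Proof.
move=> a_gt0; set g := gcdn a N.
have g_gt0 : (0 < g)%N by rewrite gcdn_gt0 a_gt0.
have aE : a = (a %/ g * g)%N by rewrite divnK // dvdn_gcdl.
have NE : N = (N %/ g * g)%N by rewrite divnK // dvdn_gcdr.
have cop : coprime (N %/ g) (a %/ g).
  rewrite /coprime gcdnC -(eqn_pmul2r g_gt0).
  by rewrite mul1n muln_gcdl -aE -NE.
rewrite {1}NE {1}aE -mulnA [(g * j)%N]mulnC mulnA dvdn_pmul2r //.
exact: Gauss_dvdr.
Qed.

(* 1 + t alpha is coprime to t, so it has the same gcd with t n as with n. *)
Lemma gcdn_shift_mul (t alpha n : nat) :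
  gcdn (1 + t * alpha) (t * n) = gcdn (1 + t * alpha) n.
Proof.
rewrite [(t * n)%N]mulnC Gauss_gcdl //.
by rewrite /coprime gcdnC addnC [(t * alpha)%N]mulnC gcdnMDl gcdn1.
Qed.

Lemma expf_cardX (F : finFieldType) (x : F) e : x ^+ (#|F| ^ e) = x.
Proof. by elim: e => [|e IH]; rewrite ?expr1 // expnS mulnC exprM IH expf_card. Qed.

(* Since x |-> x^(q^e) is a ring morphism of L fixing the image of F_q,
   it commutes with evaluation of polynomials with coefficients in F_q. *)
Lemma horner_map_expX (F : finFieldType) (L : fieldType)
    (iota : {rmorphism F -> L}) (h : {poly F}) (y : L) e :
  (map_poly iota h).[y ^+ (#|F| ^ e)] = (map_poly iota h).[y] ^+ (#|F| ^ e).
Proof.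
have q_pchar : [pchar L].-nat #|F|.
  have [p p_prime pF] := finPcharP F.
  have qE : #|F| = (p ^ logn p #|F|)%N := card_pprimeChar pF.
  rewrite (eq_pnat _ (fmorph_pchar iota)) (eq_pnat _ (pcharf_eq pF)).
  by rewrite qE pnatX pnat_id.
have qe_pchar : [pchar L].-nat (#|F| ^ e)%N by rewrite pnatX q_pchar.
have qe_neq0 : (#|F| ^ e != 0)%N by rewrite -lt0n; case/andP: qe_pchar.
elim/poly_ind: h => [|h c IH]; first by rewrite raddf0 !horner0 expr0n (negbTE qe_neq0).
rewrite raddfD /= rmorphM /= map_polyX map_polyC !hornerE IH exprDn_pchar //.
by rewrite exprMn -rmorphXn expf_cardX.
Qed.

Lemma uniq_map_inj_in (T1 T2 : eqType) (h : T1 -> T2) (s : seq T1) :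
  uniq (map h s) -> {in s &, injective h}.
Proof.
elim: s => //= z s IH /andP [hz_notin uniq_hs] x y; rewrite !inE.
move=> /orP [/eqP->|xs] /orP [/eqP->|ys] // hxy.
- by rewrite hxy (map_f h ys) in hz_notin.
- by rewrite -hxy (map_f h xs) in hz_notin.
- exact: IH.
Qed.

Lemma size_undup_map (T1 T2 : eqType) (h : T1 -> T2) (s : seq T1) :
  (size (undup (map h s)) <= size (undup s))%N /\
  (size (undup (map h s)) = size (undup s) <-> {in s &, injective h}).
Proof.
have mem_hs : undup (map h s) =i map h (undup s).
  by move=> y; rewrite mem_undup; apply: eq_mem_map => x; rewrite mem_undup.
rewrite -(size_map h (undup s)); split.
  by apply: uniq_leq_size (undup_uniq _) _ => y; rewrite mem_hs.
have -> : size (undup (map h s)) = size (map h (undup s)) <-> uniq (map h (undup s)).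
  by rewrite (uniq_size_uniq (undup_uniq _) mem_hs); split => [->|/eqP ->].
split => [/uniq_map_inj_in h_inj x y xs ys|h_inj]; first by apply: h_inj; rewrite mem_undup.
by rewrite map_inj_in_uniq ?undup_uniq // => x y; rewrite !mem_undup; apply: h_inj.
Qed.

Lemma prim_root_neq0 (R : nzRingType) t (z : R) : t.-primitive_root z -> z != 0.
Proof.
move=> z_prim; apply/eqP => z0; move: (prim_expr_order z_prim).
by rewrite z0 expr0n gtn_eqF ?(prim_order_gt0 z_prim) // => /eqP; rewrite eq_sym oner_eq0.
Qed.

Section Orbits.
Variables (T : finType) (f : T -> T).
Hypothesis f_inj : injective f.

Definition orbit_set (x : T) : {set T} := [set y | fconnect f x y].

Lemma card_orbit_set x : #|orbit_set x| = order f x.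
Proof. by apply: eq_card => y; rewrite inE. Qed.

(* Since f is a permutation, fconnect f is an equivalence: points of one
   orbit have the same orbit. *)
Lemma orbit_setP x y : fconnect f x y -> orbit_set x = orbit_set y.
Proof.
by move=> xy; apply/setP => z; rewrite !inE (same_connect (fconnect_sym f_inj) xy).
Qed.

Lemma iter_mul_order k x : iter (k * order f x) f x = x.
Proof. by elim: k => // k IH; rewrite mulSn iterD IH iter_order. Qed.

Lemma iter_fixed_order x j : (iter j f x == x) = (order f x %| j)%N.
Proof.
rewrite {1}(divn_eq j (order f x)) addnC iterD iter_mul_order.
apply/eqP/eqP => [fixed|->] //.
by rewrite -(findex_iter (ltn_pmod j (order_gt0 f x))) fixed findex0.
Qed.

Section OrbitsOfSubset.
Variable X : {set T}.

Definition orbits : {set {set T}} := [set orbit_set x | x in X].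

Lemma card_orbits_undup : #|orbits| = size (undup (map orbit_set (enum X))).
Proof.
rewrite -(card_uniqP (undup_uniq _)); apply: eq_card => B; rewrite mem_undup.
apply/imsetP/mapP => [[x xX ->]|[x]]; exists x; rewrite ?mem_enum //.
by rewrite -mem_enum.
Qed.

Lemma num_values_orbits (V : eqType) (w : T -> V) :
  (forall x, w (f x) = w x) ->
  let nw := size (undup (map w (enum X))) in
  (nw <= #|orbits|)%N /\
  (nw = #|orbits| <-> forall x y, x \in X -> y \in X ->
                         w x = w y -> exists j, iter j f x = y).
Proof.
move=> w_inv nw.
have w_iter j x : w (iter j f x) = w x by elim: j => //= j <-.
pose wB (B : {set T}) := omap w [pick y in B].
have wB_orbit x : wB (orbit_set x) = Some (w x).
  rewrite /wB; case: pickP => [y|/(_ x)]; last by rewrite inE connect0.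
  by rewrite inE => /iter_findex <- /=; congr Some; apply: w_iter.
have nwE : nw = size (undup (map wB (map orbit_set (enum X)))).
  rewrite /nw -(size_map Some) -undup_map_inj; last by move=> ? ? [].
  by rewrite -!map_comp; congr (size (undup _)); apply: eq_map => z /=; rewrite wB_orbit.
have [le_nw eq_nw] := size_undup_map wB (map orbit_set (enum X)).
rewrite card_orbits_undup nwE; split=> //; rewrite eq_nw; split.
  move=> wB_inj x y xX yX wxy.
  have xy : orbit_set x = orbit_set y.
    apply: wB_inj; rewrite ?wB_orbit ?wxy // map_f //; by rewrite mem_enum.
  have : y \in orbit_set x by rewrite xy inE connect0.
  by rewrite inE => /iter_findex y_iter; exists (findex f x y).
move=> same_w _ _ /mapP [x xX ->] /mapP [y yX ->].
rewrite !mem_enum in xX yX; rewrite !wB_orbit => -[wxy].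
have [j <-] := same_w x y xX yX wxy.
exact/orbit_setP/fconnect_iter.
Qed.

Hypothesis X_closed : forall x, x \in X -> f x \in X.

Lemma fconnect_closed x y : x \in X -> fconnect f x y -> y \in X.
Proof. by move=> xX /iter_findex <-; elim: (findex f x y) => //= j; apply: X_closed. Qed.

Lemma orbits_partition : partition orbits X.
Proof.
have -> : orbits = equivalence_partition (fconnect f) X.
  apply: eq_in_imset => x xX; apply/setP => y; rewrite !inE.
  by apply/idP/andP => [xy|[]//]; rewrite (fconnect_closed xX xy).
apply: equivalence_partitionP => x y z _ _ _; split; first exact: connect0.
move=> xy; apply/idP/idP; last exact: connect_trans.
by apply: connect_trans; rewrite fconnect_sym.
Qed.

Lemma card_orbits_uniform d :
  {in X, forall x, order f x = d} -> (#|orbits| * d = #|X|)%N.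
Proof.
move=> order_d; apply/esym/card_uniform_partition/orbits_partition.
by move=> _ /imsetP [x xX ->]; rewrite card_orbit_set order_d.
Qed.

End OrbitsOfSubset.
End Orbits.

Section ConstacyclicShift.
Variables (F : finFieldType) (n : nat) (lam : F).
Local Notation xl := (xnl n lam).
Local Notation rho := (@rho F n lam).
Hypothesis n_gt0 : (0 < n)%N.

Lemma size_xnl : size xl = n.+1.
Proof. exact: size_XnsubC. Qed.

Lemma xnl_neq0 : xl != 0.
Proof. by rewrite -size_poly_gt0 size_xnl. Qed.

Lemma rVpoly_rho (c : 'rV[F]_n) : rVpoly (rho c) = ('X * rVpoly c) %% xl.
Proof. by rewrite /rho poly_rV_K // -ltnS -size_xnl ltn_modp xnl_neq0. Qed.

Lemma rVpoly_iter_rho j (c : 'rV[F]_n) :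
  rVpoly (iter j rho c) = ('X^j * rVpoly c) %% xl.
Proof.
elim: j => [|j IH]; first by rewrite mul1r modp_small // size_xnl ltnS size_poly.
by rewrite iterS rVpoly_rho IH modp_mul mulrA -exprS.
Qed.

Lemma rho0 : rho 0 = 0.
Proof. by apply: (can_inj rVpolyK); rewrite rVpoly_rho linear0 mulr0 mod0p. Qed.

Lemma iter_rho_fixed j (c : 'rV[F]_n) :
  (iter j rho c == c) = (xl %| ('X^j - 1) * rVpoly c).
Proof.
rewrite -(inj_eq (can_inj rVpolyK)) rVpoly_iter_rho /dvdp mulrBl mul1r modpD modpN.
by rewrite [rVpoly c %% _]modp_small ?subr_eq0 // size_xnl ltnS size_poly.
Qed.

Lemma rho_modE (c : 'rV[F]_n) :
  ('X * rVpoly c) %% xl = 'X * rVpoly c - ((rVpoly c)`_n.-1)%:P * xl.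
Proof.
set p := rVpoly c; have size_p : (size p <= n)%N := size_poly _ _.
have -> : ('X * p) %% xl = ('X * p - (p`_n.-1)%:P * xl) %% xl.
  by rewrite modpD modpN modp_mull subr0.
rewrite modp_small //.
rewrite size_xnl ltnS; apply/leq_sizeP => j le_nj.
rewrite coefB coefXM coefCM coefB coefXn coefC gtn_eqF ?(leq_trans n_gt0) //.
case: (ltngtP n j) le_nj => // [lt_nj|<-] _; rewrite /= subr0; last by rewrite mulr1 subrr.
rewrite mulr0 subr0; move/leq_sizeP: size_p => -> //.
by rewrite -ltnS prednK // (leq_ltn_trans _ lt_nj).
Qed.

Lemma rho_coef (c : 'rV[F]_n) (i : 'I_n) :
  rho c 0 (ordS i) = if (i.+1 < n)%N then c 0 i else c 0 i * lam.
Proof.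
rewrite /rho mxE rho_modE coefB coefXM coefCM coefB coefXn coefC /=.
case: ltnP => [lt_in|le_ni].
  by rewrite modn_small // (ltn_eqF lt_in) /= subr0 mulr0 subr0 coef_rVpoly_ord.
have iE : i.+1 = n by apply/eqP; rewrite eqn_leq le_ni ltn_ord.
rewrite iE modnn eqxx /= eq_sym (gtn_eqF n_gt0) sub0r sub0r mulrN opprK.
by rewrite -{2}iE coef_rVpoly_ord.
Qed.

Hypothesis lam_neq0 : lam != 0.

(* rho is a permutation of F_q^n: its coordinate description can be undone
   because lambda != 0. *)
Lemma rho_inj : injective rho.
Proof.
move=> c d rho_cd; apply/rowP => j.
have := congr1 (fun v : 'rV[F]_n => v 0 (ordS j)) rho_cd.
by rewrite /= !rho_coef; case: ifP => // _; apply: mulIf.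
Qed.

(* rho only permutes the coordinates and rescales one of them by lambda != 0. *)
Lemma wH_rho (c : 'rV[F]_n) : wH (rho c) = wH c.
Proof.
rewrite /wH -(card_preimset _ (can_inj (@ordSK n))).
apply: eq_card => i; rewrite !inE rho_coef; case: ifP => // _.
by rewrite mulf_eq0 (negbTE lam_neq0) orbF.
Qed.

Lemma num_weights_orbits (C : {set 'rV[F]_n}) :
  (num_weights C <= N_rho lam (nonzero C))%N /\
  (num_weights C = N_rho lam (nonzero C) <->
     (forall c1 c2, c1 \in nonzero C -> c2 \in nonzero C ->
        wH c1 = wH c2 -> exists j : nat, iter j rho c1 = c2)).
Proof. exact (num_values_orbits rho_inj (nonzero C) wH_rho). Qed.

End ConstacyclicShift.

Section IrreducibleCode.
Variables (F L : finFieldType) (iota : {rmorphism F -> L})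
  (n t alpha : nat) (lam : F) (zeta : L) (m : {poly F}).
Hypotheses (n_gt0 : (0 < n)%N) (lam_prim : t.-primitive_root lam)
  (zeta_prim : (t * n)%N.-primitive_root zeta) (zeta_n : zeta ^+ n = iota lam)
  (m_roots : map_poly iota m =
    \prod_(r in qcoset #|F| (t * n) (1 + t * alpha)) ('X - (zeta ^+ r)%:P)).

Local Notation q := #|F|.
Local Notation N := (t * n)%N.
Local Notation a := (1 + t * alpha)%N.
Local Notation A := (qcoset q N a).
Local Notation k := #|A|.
Local Notation xl := (xnl n lam).
Local Notation g := (xl %/ m).
Local Notation C := (irr_code n lam m).
Local Notation rho := (@rho F n lam).
Local Notation roots_m := [seq zeta ^+ val r | r <- enum A].

Lemma q_gt0 : (0 < q)%N. Proof. by apply/card_gt0P; exists 0. Qed.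
Lemma N_gt0 : (0 < N)%N. Proof. by rewrite muln_gt0 n_gt0 (prim_order_gt0 lam_prim). Qed.

Lemma lam_neq0 : lam != 0. Proof. exact: prim_root_neq0 lam_prim. Qed.

Lemma lam_exp_a : lam ^+ a = lam.
Proof. by rewrite exprD expr1 exprM (prim_expr_order lam_prim) expr1n mulr1. Qed.

Lemma map_m_prod : map_poly iota m = \prod_(z <- roots_m) ('X - z%:P).
Proof. by rewrite m_roots big_map big_enum. Qed.

Lemma a_mod_in_coset : Ordinal (ltn_pmod a N_gt0) \in A.
Proof.
by rewrite inE; apply/existsP; exists (Ordinal N_gt0); rewrite /= expn0 muln1 modn_mod.
Qed.

Lemma zeta_a_root : zeta ^+ a \in roots_m.
Proof.
apply/mapP; exists (Ordinal (ltn_pmod a N_gt0)); rewrite ?mem_enum ?a_mod_in_coset //=.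
by rewrite (prim_expr_mod zeta_prim).
Qed.

Lemma root_m_conj z : z \in roots_m -> exists e, z = (zeta ^+ a) ^+ (q ^ e).
Proof.
move=> /mapP [r]; rewrite mem_enum inE => /existsP [e /eqP r_mod] ->; exists e.
by rewrite -exprM -(prim_expr_mod zeta_prim (a * _)) -r_mod (prim_expr_mod zeta_prim).
Qed.

Lemma roots_m_uniq : uniq roots_m.
Proof.
rewrite map_inj_in_uniq ?enum_uniq // => r1 r2 _ _ /eqP.
by rewrite (eq_prim_root_expr zeta_prim) !modn_small ?ltn_ord // => /eqP/val_inj.
Qed.

(* m is the minimal polynomial of zeta^a over F_q: it divides every
   polynomial vanishing at zeta^a, since such a polynomial also vanishes at
   all the conjugates of zeta^a, which are the distinct roots of m. *)
Lemma m_dvd_of_root (p : {poly F}) : root (map_poly iota p) (zeta ^+ a) -> m %| p.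
Proof.
move=> /rootP p_root; rewrite -(dvdp_map iota) map_m_prod.
apply: uniq_roots_dvdp; last by rewrite uniq_rootsE roots_m_uniq.
apply/allP => _ /root_m_conj [e ->].
by rewrite /root horner_map_expX p_root expf_eq0 expn_gt0 q_gt0 /=.
Qed.

(* zeta^a is a root of x^n - lambda, since (zeta^n)^a = lambda^a = lambda;
   hence m divides x^n - lambda. *)
Lemma m_dvd_xnl : m %| xl.
Proof.
apply: m_dvd_of_root; rewrite /root /xnl rmorphB /= map_polyXn map_polyC !hornerE.
by rewrite -exprM mulnC exprM zeta_n -rmorphXn lam_exp_a subrr.
Qed.

Lemma size_m : size m = k.+1.
Proof. by rewrite -(size_map_poly iota) map_m_prod size_prod_XsubC size_map -cardE. Qed.

Lemma xnl_factor : xl = g * m.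
Proof. by rewrite divpK // m_dvd_xnl. Qed.

Lemma g_neq0 : g != 0.
Proof. by apply: contra (xnl_neq0 lam n_gt0) => /eqP g0; rewrite xnl_factor g0 mul0r. Qed.

Lemma size_g : (size g + k = n.+1)%N.
Proof.
have m_neq0 : m != 0 by rewrite -size_poly_gt0 size_m.
have := size_xnl lam n_gt0.
by rewrite {1}xnl_factor size_mul ?g_neq0 // size_m addnS.
Qed.

Lemma size_mul_g (h : {poly F}) : (size h <= k)%N -> (size (h * g)%R <= n)%N.
Proof.
move=> size_h; apply: leq_trans (size_polyMleq _ _) _.
move: size_h size_g; move: (size g) k => sg kk; lia.
Qed.

Lemma size_div_g (p : {poly F}) : (size p <= n)%N -> (size (p %/ g)%R <= k)%N.
Proof.
rewrite size_divp ?g_neq0 //; have := size_g.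
by move: (size g) k (size p) => sg kk sp; lia.
Qed.

Lemma g_dvd_xnl : g %| xl.
Proof. by rewrite {2}xnl_factor dvdp_mulr. Qed.

Lemma mem_code (c : 'rV[F]_n) : (c \in C) = (g %| rVpoly c).
Proof.
rewrite inE; apply/existsP/idP => [[f /eqP ->]|g_dvd].
  by rewrite -(dvdp_mod _ g_dvd_xnl) dvdp_mull.
exists (poly_rV (rVpoly c %/ g)).
rewrite poly_rV_K ?divpK ?(leq_trans (leq_divp _ _)) ?size_poly //.
by rewrite modp_small // size_xnl // ltnS size_poly.
Qed.

(* C is the image of the injective encoding v |-> v(x) g(x) of F_q^k. *)
Lemma card_code : #|C| = (q ^ k)%N.
Proof.
pose enc (v : 'rV[F]_k) : 'rV[F]_n := poly_rV (rVpoly v * g).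
have rVpoly_enc v : rVpoly (enc v) = rVpoly v * g by rewrite poly_rV_K ?size_mul_g ?size_poly.
have -> : C = enc @: setT.
  apply/setP => c; rewrite mem_code; apply/idP/imsetP => [g_dvd|[v _ ->]].
    exists (poly_rV (rVpoly c %/ g)) => //; apply: (can_inj rVpolyK).
    by rewrite rVpoly_enc poly_rV_K ?divpK ?size_div_g ?size_poly.
  by rewrite rVpoly_enc dvdp_mull.
rewrite card_imset ?cardsT ?card_mx ?mul1n // => v w /(congr1 rVpoly).
by rewrite !rVpoly_enc => /(mulIf g_neq0)/(can_inj rVpolyK).
Qed.

Local Notation X := (nonzero C).

Lemma card_nonzero : #|X| = (q ^ k - 1)%N.
Proof.
have zero_in_C : (0 : 'rV[F]_n) \in C by rewrite mem_code linear0 dvdp0.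
by have := cardsD1 0 C; rewrite zero_in_C card_code => ->; rewrite addKn.
Qed.

Lemma rho_nonzero c : c \in X -> rho c \in X.
Proof.
rewrite !in_setD1 !mem_code rVpoly_rho // => /andP [c_neq0 g_dvd]; apply/andP; split.
  apply: contra c_neq0 => /eqP rho_c0; apply/eqP/(rho_inj n_gt0 lam_neq0).
  by rewrite rho_c0 rho0.
by rewrite -(dvdp_mod _ g_dvd_xnl) dvdp_mull.
Qed.

Lemma m_dvd_shift (h : {poly F}) j : h != 0 -> (size h <= k)%N ->
  (m %| ('X^j - 1) * h) = (N %| a * j)%N.
Proof.
move=> h_neq0 size_h; rewrite (prim_order_dvd zeta_prim) exprM.
have m_ndvd_h : ~~ (m %| h).
  by apply/negP => /(dvdp_leq h_neq0); rewrite size_m ltnNge size_h.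
apply/idP/eqP => [m_dvd | zeta_aj].
  have : root (map_poly iota (('X^j - 1) * h)) (zeta ^+ a).
    apply: (@root_dvdp _ (map_poly iota m)); first by rewrite dvdp_map.
    by rewrite map_m_prod root_prod_XsubC zeta_a_root.
  rewrite rmorphM rootM => /orP [|/m_dvd_of_root m_dvd_h]; last by rewrite m_dvd_h in m_ndvd_h.
  by rewrite rmorphB /= map_polyXn rmorph1 /root !hornerE subr_eq0 => /eqP.
apply: dvdp_mulr; apply: m_dvd_of_root.
by rewrite /root rmorphB /= map_polyXn rmorph1 !hornerE zeta_aj subrr.
Qed.

(* For a nonzero codeword c = h g, rho^j fixes c iff m | (x^j - 1) h. *)
Lemma iter_rho_fixed_code (c : 'rV[F]_n) j : c \in X ->
  (iter j rho c == c) = (N %| a * j)%N.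
Proof.
rewrite in_setD1 mem_code => /andP [c_neq0 g_dvd].
have p_neq0 : rVpoly c != 0.
  by apply: contra c_neq0 => /eqP p0; rewrite -(rVpolyK c) p0 linear0.
have h_neq0 : rVpoly c %/ g != 0.
  by apply: contra p_neq0 => /eqP h0; rewrite -(divpK g_dvd) h0 mul0r.
rewrite iter_rho_fixed // -(divpK g_dvd) mulrA {1}xnl_factor [g * m]mulrC.
by rewrite dvdp_mul2r ?g_neq0 // m_dvd_shift ?size_div_g ?size_poly.
Qed.

Lemma order_rho_code (c : 'rV[F]_n) : c \in X ->
  order rho c = (N %/ gcdn a N)%N.
Proof.
move=> cX; have fixedE j : (order rho c %| j)%N = (N %/ gcdn a N %| j)%N.
  by rewrite -(iter_fixed_order (rho_inj n_gt0 lam_neq0)) iter_rho_fixed_code // dvdn_mul_gcd.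
by apply/eqP; rewrite eqn_dvd fixedE dvdnn -fixedE dvdnn.
Qed.

(* Orbit count: C^* splits into orbits of common size N / gcd(a, N), and
   gcd(a, N) = gcd(a, n) since a = 1 + t alpha is prime to t. *)
Lemma orbit_count : (N_rho lam X * N = (q ^ k - 1) * gcdn a n)%N.
Proof.
have -> : N_rho lam X = #|orbits rho X| by [].
rewrite -card_nonzero -(card_orbits_uniform (rho_inj n_gt0 lam_neq0) rho_nonzero order_rho_code).
by rewrite -(gcdn_shift_mul t alpha n) -mulnA divnK ?dvdn_gcdr.
Qed.

End IrreducibleCode.

Theorem lemma2 (F L : finFieldType) (iota : {rmorphism F -> L})
  (n t alpha : nat) (lam : F) (zeta : L) (m : {poly F}) :
  (0 < n)%N ->
  coprime n #|F| ->
  t.-primitive_root lam ->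
  (t * n)%N.-primitive_root zeta ->
  zeta ^+ n = iota lam ->
  (alpha < n)%N ->
  (forall beta : nat, (beta < alpha)%N ->
     ~~ in_qcoset #|F| (t * n) (1 + t * alpha) (1 + t * beta)) ->
  map_poly iota m =
    \prod_(r in qcoset #|F| (t * n) (1 + t * alpha)) ('X - (zeta ^+ r)%:P) ->
  let k := #|qcoset #|F| (t * n) (1 + t * alpha)| in
  let C := irr_code n lam m in
  (N_rho lam (nonzero C) * (t * n) = (#|F| ^ k - 1) * gcdn (1 + t * alpha) n)%N
  /\ (num_weights C <= N_rho lam (nonzero C))%N
  /\ (num_weights C = N_rho lam (nonzero C) <->
      (forall c1 c2, c1 \in nonzero C -> c2 \in nonzero C ->
         wH c1 = wH c2 -> exists j : nat, iter j (rho lam) c1 = c2)).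
Proof.
move=> n_gt0 _ lam_prim zeta_prim zeta_n _ _ m_roots k C.
split; first exact: orbit_count n_gt0 lam_prim zeta_prim zeta_n m_roots.
exact: num_weights_orbits n_gt0 (lam_neq0 lam_prim) C.
Qed.
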